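(* There is a constant $c>0$ such that for every $n \ge 2$, every path on $n$ vertices has an $x$-monotone straight-through drawing on any set of at least $c\, n \log n$ points in the plane in general orthogonal position.
   Context: A point set is in general orthogonal position if no two of its points share the same $x$-coordinate or the same $y$-coordinate. Points are unlabelled: a drawing of a graph on a point set $P$ places the vertices at distinct points of $P$ (any vertex may go to any point; not all points need to be used). A planar L-shaped drawing is such a placement in which every edge is drawn as an orthogonal polygonal path consisting of one horizontal and one vertical segment (one bend) between its endpoints, and no two edges intersect except at a common endpoint. A straight-through drawing of a path is a planar L-shaped drawing in which, at every vertex, its (at most two) incident edges are aligned, i.e., both leave the vertex horizontally or both leave it vertically. The drawing is $x$-monotone if the $x$-coordinates of the vertices are non-decreasing in the order along the path. *)

From Stdlib Require Export Reals List.
Export ListNotations.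
Open Scope R_scope.

Definition point := (R * R)%type.

Definition general_orthogonal_position (P : list point) : Prop :=
  forall p q, In p P -> In q P -> p <> q -> fst p <> fst q /\ snd p <> snd q.

Definition on_segment (a b z : point) : Prop :=
  exists t, 0 <= t <= 1 /\
    z = (fst a + t * (fst b - fst a), snd a + t * (snd b - snd a)).

(* The path on n vertices is 0 - 1 - ... - (n-1), with edges {i, i+1}
   for i + 1 < n.  A drawing places vertex i at point pos i and draws edge
   {i, i+1} as the polyline pos i -- bend i -- pos (i+1). *)

Definition L_shaped_edge (pos bend : nat -> point) (i : nat) : Prop :=
  bend i = (fst (pos (S i)), snd (pos i)) \/
  bend i = (fst (pos i), snd (pos (S i))).

Definition on_edge (pos bend : nat -> point) (i : nat) (z : point) : Prop :=
  on_segment (pos i) (bend i) z \/ on_segment (bend i) (pos (S i)) z.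

Definition planar_L_drawing (n : nat) (P : list point) (pos bend : nat -> point) : Prop :=
  (forall i, (i < n)%nat -> In (pos i) P) /\
  (forall i j, (i < n)%nat -> (j < n)%nat -> pos i = pos j -> i = j) /\
  (forall i, (S i < n)%nat -> L_shaped_edge pos bend i) /\
  (forall i j z, (i < j)%nat -> (S j < n)%nat ->
     on_edge pos bend i z -> on_edge pos bend j z ->
     (z = pos i \/ z = pos (S i)) /\ (z = pos j \/ z = pos (S j))).

Definition leaves_horizontally (v b : point) : Prop := snd b = snd v.
Definition leaves_vertically (v b : point) : Prop := fst b = fst v.

(* At every inner vertex i (0 < i < n-1) the two incident edges
   {i-1,i} (segment bend (i-1) -- pos i) and {i,i+1} (segment pos i -- bend i)
   are aligned. *)
Definition straight_through (n : nat) (pos bend : nat -> point) : Prop :=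
  forall i, (0 < i)%nat -> (S i < n)%nat ->
    (leaves_horizontally (pos i) (bend (pred i)) /\ leaves_horizontally (pos i) (bend i)) \/
    (leaves_vertically (pos i) (bend (pred i)) /\ leaves_vertically (pos i) (bend i)).

Definition x_monotone (n : nat) (pos : nat -> point) : Prop :=
  forall i, (S i < n)%nat -> fst (pos i) <= fst (pos (S i)).

Definition xmono_straight_through_drawing (n : nat) (P : list point) : Prop :=
  exists pos bend : nat -> point,
    planar_L_drawing n P pos bend /\ straight_through n pos bend /\ x_monotone n pos.

From Stdlib Require Import Reals List Lra Lia Bool ClassicalEpsilon.
Open Scope R_scope.

(* Call points p_0, ..., p_(m-1) of P a zigzag chain if their x-coordinates
   increase strictly and, for every even i, the y-coordinate of p_(i+1) lies
   strictly between those of p_i and p_(i+2).  A zigzag chain carries an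
   x-monotone straight-through drawing of the path on m vertices: edge i is
   drawn horizontally-then-vertically for even i and vertically-then-
   horizontally for odd i, so the path passes straight through every vertex,
   and the betweenness condition keeps the two vertical pieces at an odd
   vertex from overlapping.
   By Erdos-Szekeres, among five points in general orthogonal position there
   is a monotone triple u, w, v; if v starts a zigzag chain with 2k+1 points,
   then u, w, v, ... is one with 2k+3 points.  So at most four points start a
   chain with 2k+1 but none with 2k+3 points, at most 4k points start no chain
   with 2k+1 points, and 4n+1 points already suffice: the bound is linear. *)

Definition between (a b c : R) : Prop := a <= b <= c \/ c <= b <= a.

Definition strictly_between (a b c : R) : Prop := a < b < c \/ c < b < a.

Record zigzag_chain (P : list point) (m : nat) (f : nat -> point) : Prop := {
  zigzag_in : forall i, (i < m)%nat -> In (f i) P;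
  zigzag_fst_step : forall i, (S i < m)%nat -> fst (f i) < fst (f (S i));
  zigzag_snd_between : forall i, (S (S i) < m)%nat -> Nat.even i = true ->
    strictly_between (snd (f i)) (snd (f (S i))) (snd (f (S (S i))))
}.
Arguments zigzag_in {P m f}.
Arguments zigzag_fst_step {P m f}.
Arguments zigzag_snd_between {P m f}.

Definition zigzag_bend (f : nat -> point) (i : nat) : point :=
  if Nat.even i then (fst (f (S i)), snd (f i)) else (fst (f i), snd (f (S i))).

Lemma point_eq (p q : point) : fst p = fst q -> snd p = snd q -> p = q.
Proof. destruct p, q; simpl; intros -> ->; reflexivity. Qed.

Lemma on_segment_between a b z : on_segment a b z ->
  between (fst a) (fst z) (fst b) /\ between (snd a) (snd z) (snd b).
Proof.
  intros [t [Ht ->]]; unfold between; simpl; split;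
    [destruct (Rle_dec (fst a) (fst b)) | destruct (Rle_dec (snd a) (snd b))];
    [left | right | left | right]; split; nra.
Qed.

Lemma zigzag_bend_L_shaped f i : L_shaped_edge f (zigzag_bend f) i.
Proof. unfold L_shaped_edge, zigzag_bend; destruct (Nat.even i); auto. Qed.

Lemma zigzag_bend_straight_through n f : straight_through n f (zigzag_bend f).
Proof.
  intros [|i] Hi _; [lia|]; simpl.
  unfold leaves_horizontally, leaves_vertically, zigzag_bend.
  rewrite Nat.even_succ, <- Nat.negb_even.
  destruct (Nat.even i); simpl; [right | left]; auto.
Qed.

Section ZigzagEdge.
Variables (f : nat -> point) (i : nat) (z : point).
Hypothesis Hz : on_edge f (zigzag_bend f) i z.

Lemma zigzag_edge_fst : fst (f i) <= fst (f (S i)) ->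
  fst (f i) <= fst z <= fst (f (S i)).
Proof.
  unfold on_edge, zigzag_bend in Hz; destruct (Nat.even i);
    destruct Hz as [H | H]; apply on_segment_between in H; simpl in H;
    unfold between in H; lra.
Qed.

Lemma zigzag_edge_right_end : fst (f i) < fst (f (S i)) -> fst z = fst (f (S i)) ->
  between (snd (zigzag_bend f i)) (snd z) (snd (f (S i))).
Proof.
  unfold on_edge, zigzag_bend in *; destruct (Nat.even i);
    destruct Hz as [H | H]; apply on_segment_between in H; simpl in *;
    unfold between in *; lra.
Qed.

Lemma zigzag_edge_left_end : fst (f i) < fst (f (S i)) -> fst z = fst (f i) ->
  between (snd (f i)) (snd z) (snd (zigzag_bend f i)).
Proof.
  unfold on_edge, zigzag_bend in *; destruct (Nat.even i);
    destruct Hz as [H | H]; apply on_segment_between in H; simpl in *;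
    unfold between in *; lra.
Qed.

End ZigzagEdge.

Section ZigzagDrawing.
Variables (P : list point) (m : nat) (f : nat -> point).
Hypothesis Hf : zigzag_chain P m f.

Lemma zigzag_fst_lt i j : (i < j)%nat -> (j < m)%nat -> fst (f i) < fst (f j).
Proof.
  induction 1 as [|j Hij IH]; intros Hj.
  - apply (zigzag_fst_step Hf); lia.
  - apply Rlt_trans with (fst (f j)); [apply IH; lia | apply (zigzag_fst_step Hf); lia].
Qed.

Lemma zigzag_adjacent_edges_meet i z : (S (S i) < m)%nat ->
  on_edge f (zigzag_bend f) i z -> on_edge f (zigzag_bend f) (S i) z -> z = f (S i).
Proof.
  intros Hi Hzi Hzj.
  assert (Hx0 : fst (f i) < fst (f (S i))) by (apply (zigzag_fst_step Hf); lia).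
  assert (Hx1 : fst (f (S i)) < fst (f (S (S i)))) by (apply (zigzag_fst_step Hf); lia).
  pose proof (zigzag_edge_fst _ _ _ Hzi (Rlt_le _ _ Hx0)).
  pose proof (zigzag_edge_fst _ _ _ Hzj (Rlt_le _ _ Hx1)).
  assert (Ex : fst z = fst (f (S i))) by lra.
  apply point_eq; [exact Ex|].
  pose proof (zigzag_edge_right_end _ _ _ Hzi Hx0 Ex) as Hr.
  pose proof (zigzag_edge_left_end _ _ _ Hzj Hx1 Ex) as Hl.
  unfold zigzag_bend in Hr, Hl; rewrite Nat.even_succ, <- Nat.negb_even in Hl.
  destruct (Nat.even i) eqn:Ev; simpl in Hr, Hl; unfold between in Hr, Hl.
  - pose proof (zigzag_snd_between Hf i Hi Ev); unfold strictly_between in *; lra.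
  - lra.
Qed.

Lemma zigzag_distant_edges_disjoint i j z : (S i < j)%nat -> (S j < m)%nat ->
  on_edge f (zigzag_bend f) i z -> on_edge f (zigzag_bend f) j z -> False.
Proof.
  intros Hij Hj Hzi Hzj.
  pose proof (zigzag_edge_fst _ _ _ Hzi (Rlt_le _ _ (zigzag_fst_step Hf i ltac:(lia)))).
  pose proof (zigzag_edge_fst _ _ _ Hzj (Rlt_le _ _ (zigzag_fst_step Hf j Hj))).
  pose proof (zigzag_fst_lt (S i) j Hij ltac:(lia)); lra.
Qed.

Lemma zigzag_planar_L_drawing : planar_L_drawing m P f (zigzag_bend f).
Proof.
  split; [exact (zigzag_in Hf) | split; [| split]].
  - intros i j Hi Hj E.
    destruct (Nat.lt_total i j) as [L | [L | L]]; auto; exfalso.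
    + pose proof (zigzag_fst_lt i j L Hj); rewrite E in *; lra.
    + pose proof (zigzag_fst_lt j i L Hi); rewrite E in *; lra.
  - intros i _; apply zigzag_bend_L_shaped.
  - intros i j z Hij Hj Hzi Hzj.
    destruct (Nat.eq_dec j (S i)) as [-> | Hne].
    + rewrite (zigzag_adjacent_edges_meet i z Hj Hzi Hzj); auto.
    + destruct (zigzag_distant_edges_disjoint i j z ltac:(lia) Hj Hzi Hzj).
Qed.

Lemma zigzag_chain_drawing n : (n <= m)%nat -> xmono_straight_through_drawing n P.
Proof.
  intros Hn; exists f, (zigzag_bend f).
  destruct zigzag_planar_L_drawing as [Hin [Hinj [HL Hplanar]]].
  split; [| split].
  - split; [| split; [| split]]; intros; [apply Hin | apply Hinj | apply HL | eapply Hplanar];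
      eauto; lia.
  - apply zigzag_bend_straight_through.
  - intros i Hi; apply Rlt_le, (zigzag_fst_step Hf); lia.
Qed.

End ZigzagDrawing.

Definition pbool (A : Prop) : bool :=
  if excluded_middle_informative A then true else false.

Lemma pboolP A : reflect A (pbool A).
Proof. unfold pbool; destruct (excluded_middle_informative A); constructor; auto. Qed.

Lemma pbool_inj {A B : Prop} : pbool A = pbool B -> A -> B.
Proof. destruct (pboolP A), (pboolP B); easy. Qed.

Lemma length_filter_le_add {A} (p q r : A -> bool) l :
  (forall x, p x = true -> q x = true \/ r x = true) ->
  (length (filter p l) <= length (filter q l) + length (filter r l))%nat.
Proof.
  intros H; induction l as [|a l IH]; simpl; [lia|].
  destruct (p a) eqn:Ep, (q a) eqn:Eq, (r a) eqn:Er; simpl; try lia.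
  destruct (H a Ep); congruence.
Qed.

Section ErdosSzekeres.
Variable L : list point.

Definition monotone_triple_free : Prop :=
  forall u w v, In u L -> In w L -> In v L -> fst u < fst w < fst v ->
    ~ strictly_between (snd u) (snd w) (snd v).

Definition has_lower_left (p : point) : Prop :=
  exists q, In q L /\ fst q < fst p /\ snd q < snd p.

Definition has_upper_left (p : point) : Prop :=
  exists q, In q L /\ fst q < fst p /\ snd p < snd q.

Definition corner_type (p : point) : bool * bool :=
  (pbool (has_lower_left p), pbool (has_upper_left p)).

Hypothesis Hfree : monotone_triple_free.

(* If p lies below-left of q, then q has a lower-left neighbour, hence so does
   p, say r, and r, p, q is an increasing triple; symmetrically above-left. *)
Lemma corner_type_neq p q : In p L -> In q L -> fst p < fst q -> snd p <> snd q ->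
  corner_type p <> corner_type q.
Proof.
  intros Hp Hq Hx Hy E; injection E as Elow Eup.
  destruct (Rlt_dec (snd p) (snd q)) as [Hlt | Hge].
  - destruct (pbool_inj (eq_sym Elow)) as [r [Hr [Hrx Hry]]]; [exists p; auto|].
    apply (Hfree r p q Hr Hp Hq); [lra | unfold strictly_between; lra].
  - destruct (pbool_inj (eq_sym Eup)) as [r [Hr [Hrx Hry]]]; [exists p; split; auto; lra|].
    apply (Hfree r p q Hr Hp Hq); [lra | unfold strictly_between; lra].
Qed.

Lemma monotone_triple_free_length : NoDup L -> general_orthogonal_position L ->
  (length L <= 4)%nat.
Proof.
  intros Hnd Hg.
  assert (Hinj : NoDup (map corner_type L)).
  { apply NoDup_map_NoDup_ForallPairs; [|exact Hnd].
    intros p q Hp Hq E; destruct (classic (p = q)) as [|Hne]; auto; exfalso.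
    destruct (Hg p q Hp Hq Hne) as [Hx Hy].
    destruct (Rtotal_order (fst p) (fst q)) as [Hlt | [Heq | Hlt]]; [| contradiction |].
    - exact (corner_type_neq p q Hp Hq Hlt Hy E).
    - exact (corner_type_neq q p Hq Hp Hlt (not_eq_sym Hy) (eq_sym E)). }
  rewrite <- (length_map corner_type L).
  apply (NoDup_incl_length Hinj
           (l' := [(true, true); (true, false); (false, true); (false, false)])).
  intros [[|] [|]] _; simpl; tauto.
Qed.

End ErdosSzekeres.

Definition starts_zigzag_chain (P : list point) (k : nat) (u : point) : Prop :=
  exists f, f 0%nat = u /\ zigzag_chain P (2 * k + 1) f.

Definition starts_zigzag_chainb (P : list point) (k : nat) (u : point) : bool :=
  pbool (starts_zigzag_chain P k u).

Lemma starts_zigzag_chainP P k u :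
  reflect (starts_zigzag_chain P k u) (starts_zigzag_chainb P k u).
Proof. apply pboolP. Qed.

Lemma starts_zigzag_chain_0 P u : In u P -> starts_zigzag_chain P 0 u.
Proof. intros Hu; exists (fun _ => u); split; [reflexivity | constructor; intros; auto; lia]. Qed.

Lemma starts_zigzag_chain_S P k u w v : In u P -> In w P -> starts_zigzag_chain P k v ->
  fst u < fst w < fst v -> strictly_between (snd u) (snd w) (snd v) ->
  starts_zigzag_chain P (S k) u.
Proof.
  intros Hu Hw [f [Hf0 Hf]] Hx Hy; subst v.
  exists (fun i => match i with 0 => u | 1 => w | S (S j) => f j end).
  split; [reflexivity | constructor].
  - intros [|[|j]] Hj; auto. apply (zigzag_in Hf); lia.
  - intros [|[|j]] Hj; simpl; [lra | lra | apply (zigzag_fst_step Hf); lia].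
  - intros [|[|j]] Hj He; simpl; [exact Hy | discriminate |].
    apply (zigzag_snd_between Hf); [lia | exact He].
Qed.

Section ChainStarts.
Variable P : list point.
Hypotheses (Hnd : NoDup P) (Hg : general_orthogonal_position P).

Lemma length_lost_starters k :
  (length (filter (fun u => starts_zigzag_chainb P k u && negb (starts_zigzag_chainb P (S k) u)) P)
   <= 4)%nat.
Proof.
  apply monotone_triple_free_length.
  - intros u w v Hu Hw Hv Hx Hy.
    apply filter_In in Hu as [Hu Hlostu]; apply filter_In in Hw as [Hw _];
      apply filter_In in Hv as [_ Hlostv].
    destruct (starts_zigzag_chainP P (S k) u) as [|Hn];
      [rewrite andb_false_r in Hlostu; discriminate|].
    destruct (starts_zigzag_chainP P k v) as [Hstart|]; [|discriminate].
    exact (Hn (starts_zigzag_chain_S P k u w v Hu Hw Hstart Hx Hy)).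
  - exact (NoDup_filter _ Hnd).
  - intros p q Hp Hq; apply filter_In in Hp, Hq; apply Hg; tauto.
Qed.

Lemma length_non_starters k :
  (length (filter (fun u => negb (starts_zigzag_chainb P k u)) P) <= 4 * k)%nat.
Proof.
  induction k as [|k IH].
  - rewrite (filter_ext_in _ (fun _ => false)), filter_false; [simpl; lia|].
    intros u Hu; destruct (starts_zigzag_chainP P 0 u) as [|Hn]; auto.
    destruct (Hn (starts_zigzag_chain_0 P u Hu)).
  - replace (4 * S k)%nat with (4 * k + 4)%nat by lia.
    eapply Nat.le_trans; [| apply Nat.add_le_mono; [exact IH | exact (length_lost_starters k)]].
    apply length_filter_le_add.
    intros u Hu; rewrite Hu, andb_true_r.
    destruct (starts_zigzag_chainb P k u); auto.
Qed.

Lemma zigzag_chain_exists k : (4 * k < length P)%nat ->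
  exists f, zigzag_chain P (2 * k + 1) f.
Proof.
  intros Hlen.
  pose proof (filter_length (starts_zigzag_chainb P k) P) as Hsplit.
  pose proof (length_non_starters k).
  destruct (filter (starts_zigzag_chainb P k) P) as [|u l] eqn:E;
    [simpl in Hsplit; lia|].
  assert (Hu : In u (filter (starts_zigzag_chainb P k) P))
    by (rewrite E; left; reflexivity).
  apply filter_In in Hu as [_ Hu].
  destruct (starts_zigzag_chainP P k u) as [[f [_ Hf]]|]; [exists f; exact Hf | discriminate].
Qed.

End ChainStarts.

Theorem theorem1 :
  exists c : R, 0 < c /\
    forall (n : nat) (P : list point),
      (2 <= n)%nat ->
      NoDup P ->
      general_orthogonal_position P ->
      c * INR n * ln (INR n) <= INR (length P) ->
      xmono_straight_through_drawing n P.
Proof.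
  exists 8; split; [lra|]; intros n P Hn Hnd Hg Hlen.
  assert (Hn2 : 2 <= INR n) by (apply (le_INR 2); lia).
  assert (Hln : / 2 < ln (INR n)).
  { destruct (Rle_lt_or_eq_dec 2 (INR n) Hn2) as [Hlt | <-]; [| exact ln_lt_2].
    apply Rlt_trans with (ln 2); [exact ln_lt_2 | apply ln_increasing; lra]. }
  assert (Hbig : (4 * n < length P)%nat).
  { apply INR_lt; rewrite mult_INR; simpl INR; nra. }
  destruct (zigzag_chain_exists P Hnd Hg n Hbig) as [f Hf].
  apply (zigzag_chain_drawing P (2 * n + 1) f Hf); lia.
Qed.
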